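(* Let $\mathbf{x}\in\mathbb{R}^d$ and consider the training set $\{(\mathbf{x},1),(-\mathbf{x},-1)\}$ classified by the minimum norm interpolant $g_K$ of the CNTK-GAP kernel $K$ (patch size $q$, $1\le q\le d$), assuming the Gram matrix $H_K$ on $\{\mathbf{x},-\mathbf{x}\}$ is invertible. Then the resulting linear classifier has separating hyperplane $\mathbf{z}^T\mathbf{1}_d=0$, and its margin on the training set equals the difference between the DC components of the two training points, $|f_{dc}(\mathbf{x})-f_{dc}(-\mathbf{x})|$.
   Context: $f_{dc}(\mathbf{x})=\frac{1}{\sqrt d}\sum_{i=1}^d x_i$. The margin of a hyperplane through the origin with unit normal $\mathbf{w}$ separating a point $\mathbf{a}$ (low side) from $\mathbf{b}$ (high side) is $\mathbf{w}^T\mathbf{b}-\mathbf{w}^T\mathbf{a}$. FC-NTK on $\mathbb{R}^q$: $k(\mathbf{u},\mathbf{v})=\frac{1}{\pi}\left(2\mathbf{u}^T\mathbf{v}(\pi-\phi)+\|\mathbf{u}\|\|\mathbf{v}\|\sin\phi\right)$ with $\phi$ the angle between $\mathbf{u},\mathbf{v}$ ($k=0$ if an argument is $0$). CNTK-GAP: $K(\mathbf{z},\mathbf{x})=\frac{1}{d^2}\sum_{i,j=1}^d k(\bar{\mathbf{z}}_i,\bar{\mathbf{x}}_j)$ where $\bar{\mathbf{z}}_i=(z_i,z_{i+1},\dots,z_{i+q-1})^T$ with indices cyclic mod $d$. Minimum norm interpolant: $g_K(\mathbf{z})=(K(\mathbf{z},\mathbf{x}),K(\mathbf{z},-\mathbf{x}))H_K^{-1}(1,-1)^T$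 with $H_K$ the $2\times2$ Gram matrix of $K$ on $(\mathbf{x},-\mathbf{x})$. $\mathbf{1}_d$ is the all-ones vector. *)

From HB Require Import structures.
From mathcomp Require Import all_boot all_order all_algebra.
From mathcomp Require Import reals trigo.
Set Implicit Arguments. Unset Strict Implicit. Unset Printing Implicit Defensive.
Import Order.TTheory GRing.Theory Num.Theory.
Local Open Scope ring_scope.

Section Defs.
Variable R : realType.

Definition dotv (n : nat) (u v : 'rV[R]_n) : R := \sum_(i < n) u 0 i * v 0 i.
Definition vnorm (n : nat) (u : 'rV[R]_n) : R := Num.sqrt (dotv u u).

Definition vangle (n : nat) (u v : 'rV[R]_n) : R :=
  acos (dotv u v / (vnorm u * vnorm v)).

Definition fc_ntk (q : nat) (u v : 'rV[R]_q) : R :=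
  if (u == 0) || (v == 0) then 0 else
  let phi := vangle u v in
  pi^-1 * (2 * dotv u v * (pi - phi) + vnorm u * vnorm v * sin phi).

Definition cyc (d : nat) (i : 'I_d) (l : nat) : 'I_d :=
  Ordinal (ltn_pmod (i + l) (leq_ltn_trans (leq0n i) (ltn_ord i))).

Definition patch (d q : nat) (z : 'rV[R]_d) (i : 'I_d) : 'rV[R]_q :=
  \row_(l < q) z 0 (cyc i l).

Definition cntk_gap (d q : nat) (z x : 'rV[R]_d) : R :=
  (d%:R ^+ 2)^-1 * \sum_(i < d) \sum_(j < d) fc_ntk (patch q z i) (patch q x j).

Definition train_pt (d : nat) (x : 'rV[R]_d) (i : 'I_2) : 'rV[R]_d :=
  if i == 0 then x else - x.
Definition train_lbl (i : 'I_2) : R := if i == 0 then 1 else -1.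

Definition gram_K (d q : nat) (x : 'rV[R]_d) : 'M[R]_2 :=
  \matrix_(i < 2, j < 2) cntk_gap q (train_pt x i) (train_pt x j).

Definition g_K (d q : nat) (x z : 'rV[R]_d) : R :=
  ((\row_(j < 2) cntk_gap q z (train_pt x j)) *m invmx (gram_K q x)
     *m (\col_(i < 2) train_lbl i)) 0 0.

Definition f_dc (d : nat) (x : 'rV[R]_d) : R :=
  (Num.sqrt d%:R)^-1 * \sum_(i < d) x 0 i.

(* margin of hyperplane with unit normal w separating a (low) from b (high) *)
Definition margin (d : nat) (w a b : 'rV[R]_d) : R := dotv w b - dotv w a.

End Defs.

From HB Require Import structures.
From mathcomp Require Import all_boot all_order all_algebra.
From mathcomp Require Import reals trigo.
From mathcomp Require Import ring lra.

(* The FC-NTK splits as an even function of its second argument plus the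
   linear term 2 u.v, because the angle to -v is pi minus the angle to v.
   Summed over all pairs of cyclic patches, each of the q patch positions
   contributes S(z) S(x), where S is the coordinate sum, so
   K(z,x) - K(z,-x) = (2q/d^2) S(z) S(x).  Hence (1,-1) is an eigenvector of H_K and g_K(z) = S(z)/S(x),
   a positive multiple of the projection of z on sg(S x) 1_d / sqrt d; its
   margin 2|S x|/sqrt d is exactly |f_dc x - f_dc (-x)|. *)

Set Implicit Arguments. Unset Strict Implicit. Unset Printing Implicit Defensive.
Import Order.TTheory GRing.Theory Num.Theory.
Local Open Scope ring_scope.

Section DotProduct.
Variable R : realType.

Lemma dotvNl n (u v : 'rV[R]_n) : dotv (- u) v = - dotv u v.
Proof. by rewrite /dotv -sumrN; apply: eq_bigr => i _; rewrite mxE mulNr. Qed.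

Lemma dotvNr n (u v : 'rV[R]_n) : dotv u (- v) = - dotv u v.
Proof. by rewrite /dotv -sumrN; apply: eq_bigr => i _; rewrite mxE mulrN. Qed.

Lemma dotv_ge0 n (u : 'rV[R]_n) : 0 <= dotv u u.
Proof. by apply: sumr_ge0 => i _; rewrite -expr2 sqr_ge0. Qed.

Lemma vnormN n (u : 'rV[R]_n) : vnorm (- u) = vnorm u.
Proof. by rewrite /vnorm dotvNl dotvNr opprK. Qed.

Lemma vnorm_sqr n (u : 'rV[R]_n) : vnorm u ^+ 2 = dotv u u.
Proof. by rewrite sqr_sqrtr // dotv_ge0. Qed.

(* Lagrange's identity: the defect is half the sum of the squared 2x2 minors. *)
Lemma dotv_CauchySchwarz n (u v : 'rV[R]_n) :
  dotv u v ^+ 2 <= dotv u u * dotv v v.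
Proof.
pose A i j := u 0 i * u 0 i * (v 0 j * v 0 j) - u 0 i * v 0 i * (u 0 j * v 0 j).
have sumA : \sum_i \sum_j A i j = dotv u u * dotv v v - dotv u v ^+ 2.
  rewrite /dotv expr2 !big_distrlr -sumrB /=.
  by apply: eq_bigr => i _; rewrite -sumrB.
have minors : \sum_i \sum_j (u 0 i * v 0 j - u 0 j * v 0 i) ^+ 2 =
              \sum_i \sum_j A i j + \sum_i \sum_j A j i.
  rewrite -big_split /=; apply: eq_bigr => i _.
  by rewrite -big_split /=; apply: eq_bigr => j _; rewrite /A; ring.
rewrite -subr_ge0 -sumA.
have : 0 <= \sum_i \sum_j (u 0 i * v 0 j - u 0 j * v 0 i) ^+ 2.
  by do 2!(apply: sumr_ge0 => ? _); exact: sqr_ge0.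
by rewrite minors [X in _ + X]exchange_big /= -mulr2n pmulrn_lge0.
Qed.

Lemma dotv_cos_bound n (u v : 'rV[R]_n) :
  -1 <= dotv u v / (vnorm u * vnorm v) <= 1.
Proof.
have [->|ab0] := eqVneq (vnorm u * vnorm v) 0.
  by rewrite invr0 mulr0 lerN10 ler01.
have ab_gt0 : 0 < vnorm u * vnorm v by rewrite lt_def ab0 mulr_ge0 ?sqrtr_ge0.
have CS := dotv_CauchySchwarz u v.
rewrite -[dotv u u]vnorm_sqr -[dotv v v]vnorm_sqr -exprMn in CS.
rewrite ler_pdivlMr ?ler_pdivrMr // mulN1r mul1r.
by apply/andP; split; nra.
Qed.

End DotProduct.

Lemma invmx_eigenvector (F : fieldType) n (A : 'M[F]_n) (c : 'cV_n) (a : F) :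
  A \in unitmx -> A *m c = a *: c -> invmx A *m c = a^-1 *: c.
Proof.
move=> A_unit Ac.
have c_eq : c = a *: (invmx A *m c).
  by rewrite scalemxAr -Ac mulKmx.
have [a0|a_neq0] := eqVneq a 0.
  by rewrite c_eq a0 !scale0r mulmx0 scaler0.
by rewrite {2}c_eq scalerA mulVf ?scale1r.
Qed.

Lemma unitmx_eigenvalue_neq0 (F : fieldType) n (A : 'M[F]_n) (c : 'cV_n) (a : F) :
  A \in unitmx -> A *m c = a *: c -> c != 0 -> a != 0.
Proof.
move=> A_unit Ac; apply: contraNneq => a0.
by rewrite -(mulKmx A_unit c) Ac a0 scale0r mulmx0.
Qed.

Section CNTK.
Variable R : realType.

Lemma fc_ntk_oddE q (u v : 'rV[R]_q) :
  fc_ntk u v - fc_ntk u (- v) = 2 * dotv u v.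
Proof.
rewrite /fc_ntk oppr_eq0.
have [->|u0] /= := eqVneq u 0.
  by rewrite subrr /dotv big1 ?mulr0 // => i _; rewrite mxE mul0r.
have [->|v0] /= := eqVneq v 0.
  by rewrite subrr /dotv big1 ?mulr0 // => i _; rewrite mxE mulr0.
rewrite /vangle vnormN dotvNr mulNr acosN ?dotv_cos_bound //.
have sin_supp (t : R) : sin (pi - t) = sin t by rewrite sinB sinpi cospi; ring.
rewrite sin_supp; have : pi != 0 :> R by rewrite gt_eqF ?pi_gt0.
(* [field] would unfold [pi] into its defining choice term, so abstract it. *)
by move: (pi : R) => p p0; field.
Qed.

Definition vsum n (z : 'rV[R]_n) : R := \sum_(i < n) z 0 i.

Lemma vsumN n (z : 'rV[R]_n) : vsum (- z) = - vsum z.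
Proof. by rewrite /vsum -sumrN; apply: eq_bigr => i _; rewrite mxE. Qed.

Lemma dotv_scale_const n (a : R) (z : 'rV[R]_n) :
  dotv (a *: const_mx 1) z = a * vsum z.
Proof. by rewrite /dotv mulr_sumr; apply: eq_bigr => i _; rewrite !mxE mulr1. Qed.

Lemma vnorm_scale_const n (a : R) :
  vnorm (a *: const_mx 1 : 'rV[R]_n) = `|a| * Num.sqrt n%:R.
Proof.
have sum_const : vsum (a *: const_mx 1 : 'rV[R]_n) = a * n%:R.
  rewrite /vsum (eq_bigr (fun=> a)) => [|i _]; last by rewrite !mxE mulr1.
  by rewrite sumr_const card_ord mulr_natr.
by rewrite /vnorm dotv_scale_const sum_const mulrA -expr2 sqrtrM ?sqr_ge0 ?sqrtr_sqr.
Qed.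

Lemma cyc_inj d l : injective (fun i : 'I_d => cyc i l).
Proof.
move=> i j /(congr1 val) /eqP /=; rewrite eqn_modDr !modn_small //.
by move/eqP/val_inj.
Qed.

Lemma sum_cyc d l (F : 'I_d -> R) : \sum_(i < d) F (cyc i l) = \sum_i F i.
Proof. by rewrite [RHS](reindex_inj (@cyc_inj d l)). Qed.

Lemma patchN d q (x : 'rV[R]_d) j : patch q (- x) j = - patch q x j.
Proof. by apply/rowP => l; rewrite !mxE. Qed.

(* For a fixed position l, the l-th entries of the d cyclic patches run over
   all coordinates once. *)
Lemma sum_dotv_patch d q (z x : 'rV[R]_d) :
  \sum_(i < d) \sum_(j < d) dotv (patch q z i) (patch q x j) =
  q%:R * (vsum z * vsum x).
Proof.
rewrite /dotv; under eq_bigr => i _ do rewrite exchange_big.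
rewrite exchange_big /= mulr_natl -[in RHS](card_ord q) -sumr_const.
apply: eq_bigr => l _.
rewrite -big_distrlr /= /vsum -(sum_cyc l (fun i => z 0 i)) -(sum_cyc l (fun j => x 0 j)).
by congr (_ * _); apply: eq_bigr => i _; rewrite mxE.
Qed.

Lemma cntk_gap_oddE d q (z x : 'rV[R]_d) :
  cntk_gap q z x - cntk_gap q z (- x) =
  (d%:R ^+ 2)^-1 * (2 * q%:R) * (vsum z * vsum x).
Proof.
rewrite /cntk_gap -mulrBr -sumrB.
under eq_bigr => i _ do rewrite -sumrB.
under eq_bigr => i _ do under eq_bigr => j _ do rewrite patchN fc_ntk_oddE.
under eq_bigr => i _ do rewrite -mulr_sumr.
by rewrite -mulr_sumr sum_dotv_patch !mulrA.
Qed.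

Definition train_lbls : 'cV[R]_2 := \col_i train_lbl R i.

Lemma gram_K_train_lbls d q (x : 'rV[R]_d) :
  gram_K q x *m train_lbls =
  (cntk_gap q x x - cntk_gap q x (- x)) *: train_lbls.
Proof.
apply/colP => i; rewrite !mxE !big_ord_recr big_ord0 /= !mxE /train_lbl /train_pt.
case: i => [[|[|//]]] ? /=; first by ring.
have := cntk_gap_oddE q (- x) x; have := cntk_gap_oddE q x x.
rewrite vsumN; lra.
Qed.

Section Interpolant.
Variables (d q : nat) (x : 'rV[R]_d).
Hypothesis gram_unit : gram_K q x \in unitmx.

Lemma gram_K_eigenvalue_neq0 : cntk_gap q x x - cntk_gap q x (- x) != 0.
Proof.
apply: unitmx_eigenvalue_neq0 gram_unit (gram_K_train_lbls q x) _.
by apply/eqP => /colP /(_ 0); rewrite !mxE /train_lbl /=; apply/eqP; rewrite oner_eq0.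
Qed.

Lemma g_K_oddE z :
  g_K q x z = (cntk_gap q z x - cntk_gap q z (- x)) /
              (cntk_gap q x x - cntk_gap q x (- x)).
Proof.
rewrite /g_K -mulmxA -/train_lbls.
rewrite (invmx_eigenvector gram_unit (gram_K_train_lbls q x)).
by rewrite !mxE !big_ord_recr big_ord0 /= !mxE /train_lbl /train_pt /=; ring.
Qed.

Lemma vsum_neq0_of_gram_unit : vsum x != 0.
Proof.
apply: (contraNneq _ gram_K_eigenvalue_neq0) => Sx0.
by rewrite cntk_gap_oddE Sx0 mul0r mulr0.
Qed.

Lemma g_K_vsumE z : g_K q x z = vsum z / vsum x.
Proof.
have := gram_K_eigenvalue_neq0; rewrite g_K_oddE !cntk_gap_oddE.
set c := _ * (2 * q%:R) => cx0.
have c0 : c != 0 by apply: contraNneq cx0 => ->; rewrite mul0r.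
by field; rewrite c0 vsum_neq0_of_gram_unit.
Qed.

End Interpolant.

End CNTK.

Theorem corollary2 (R : realType) (d q : nat) (x : 'rV[R]_d) :
  (0 < q)%N -> (q <= d)%N -> gram_K q x \in unitmx ->
  exists (w : 'rV[R]_d) (alpha : R),
    w = alpha *: const_mx 1 /\ vnorm w = 1 /\
    exists s : R, 0 < s /\
      (forall z : 'rV[R]_d, g_K q x z = s * dotv w z) /\
      margin w (- x) x = `|f_dc x - f_dc (- x)|.
Proof.
move=> q_gt0 qd gram_unit.
have Sx0 := vsum_neq0_of_gram_unit gram_unit.
set Sx := vsum x in Sx0 *; set sq := Num.sqrt (d%:R : R); set sg := Num.sg Sx.
have sq_gt0 : 0 < sq by rewrite sqrtr_gt0 ltr0n (leq_trans q_gt0 qd).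
have sg_norm : `|sg| = 1 by rewrite normr_sg Sx0.
exists ((sg / sq) *: const_mx 1), (sg / sq); split => //; split.
  by rewrite vnorm_scale_const normrM sg_norm normfV gtr0_norm // mul1r mulVf ?gt_eqF.
exists (sq / `|Sx|); split; first by rewrite divr_gt0 ?normr_gt0.
split => [z|].
  rewrite g_K_vsumE // -/Sx dotv_scale_const normrEsg -/sg.
  by field; rewrite gt_eqF // Sx0 sgr_eq0.
rewrite /margin !dotv_scale_const /f_dc -/(vsum x) -/(vsum (- x)) vsumN -/Sx -/sq.
rewrite -!mulrBr opprK normrM normfV (gtr0_norm sq_gt0) -mulr2n normrMn normrEsg -/sg.
by ring.
Qed.
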